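(* Let $\Gamma$ be a connected simple graph and $N>2$. Then $\mathrm{Conf}_{\Gamma}(\mathbb{R}^N)$ is $(N-2)$-connected.
   Context: For a simple graph $\Gamma$ with vertex set $\{1,\dots,m\}$, $\mathrm{Conf}_{\Gamma}(X)=\{(x_1,\dots,x_m)\in X^m : x_i\neq x_j \text{ whenever } \{i,j\}\text{ is an edge}\}$. *)

From HB Require Import structures.
From mathcomp Require Import all_boot all_order all_algebra.
From mathcomp Require Import all_classical all_reals all_analysis.
Set Implicit Arguments. Unset Strict Implicit. Unset Printing Implicit Defensive.
Import Order.TTheory GRing.Theory Num.Theory.
Import numFieldNormedType.Exports.
Local Open Scope classical_set_scope.
Local Open Scope ring_scope.

Definition simple_graph (m : nat) (e : rel 'I_m) : Prop :=
  symmetric e /\ irreflexive e.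

Definition graph_connected (m : nat) (e : rel 'I_m) : Prop :=
  forall i j : 'I_m, connect e i j.

(* Conf_Gamma(R^N): configurations (x_1,...,x_m) in (R^N)^m, stored as the
   rows of an m x N real matrix, with x_i <> x_j whenever {i,j} is an edge.
   (R^N)^m carries the product topology = topology of 'M[R]_(m,N). *)
Definition Conf (R : realType) (m N : nat) (e : rel 'I_m) : set 'M[R]_(m, N) :=
  [set x | forall i j : 'I_m, e i j -> row i x <> row j x].

Definition sphere (R : realType) (k : nat) : set 'rV[R]_k.+1 :=
  [set s | \sum_(i < k.+1) s ord0 i ^+ 2 = 1].

Arguments sphere R k : clear implicits.

Definition sphere_pt (R : realType) (k : nat) : 'rV[R]_k.+1 :=
  \row_(i < k.+1) (i == ord0)%:R.

Arguments sphere_pt R k : clear implicits.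

Definition unit_interval (R : realType) : set R := [set t | 0 <= t <= 1].

Arguments unit_interval R : clear implicits.

(* pi_k(X, x0) is trivial: every based continuous map (S^k, s0) -> (X, x0)
   is homotopic relative to the base point to the constant map at x0. *)
Definition pi_trivial (R : realType) (T : topologicalType) (X : set T)
    (k : nat) (x0 : T) : Prop :=
  forall f : 'rV[R]_k.+1 -> T,
    {within sphere R k, continuous f} ->
    f @` sphere R k `<=` X ->
    f (sphere_pt R k) = x0 ->
    exists H : R * 'rV[R]_k.+1 -> T,
      [/\ {within unit_interval R `*` sphere R k, continuous H},
          H @` (unit_interval R `*` sphere R k) `<=` X,
          (forall s, sphere R k s -> H (0, s) = f s),
          (forall s, sphere R k s -> H (1, s) = x0) &
          (forall t, unit_interval R t -> H (t, sphere_pt R k) = x0)].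

Arguments pi_trivial R [T] X k x0.

(* X is n-connected: X is nonempty and pi_k(X, x0) = 0 for all 0 <= k <= n
   and all base points x0 in X (k = 0: path-connectedness). *)
Definition n_connected (R : realType) (T : topologicalType) (n : nat)
    (X : set T) : Prop :=
  X !=set0 /\
  forall k : nat, (k <= n)%N -> forall x0 : T, X x0 -> pi_trivial R X k x0.

Arguments n_connected R [T] n X.
Arguments Conf R [m] N e.

From HB Require Import structures.
From mathcomp Require Import all_boot all_order all_algebra.
From mathcomp Require Import all_classical all_reals all_analysis.
Import numFieldNormedType.Exports.
From mathcomp Require Import ring lra zify.

(* A based map f : S^k -> Conf_Gamma(R^N), k <= N - 2, is contracted in two
   steps.  Conf is open and S^k is compact, so rows of f joined by an edge stay
   4 eps apart, and f is homotopic along segments to a Lipschitz approximation g.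
   Rows i, j of g + ramp w (ramp w has rows 0, w, 2 w, ...) collide exactly when w
   lies in the image of the Lipschitz map x |-> (row i (g x) - row j (g x)) / (j - i)
   on the unit ball of R^(k+1); since k + 1 < N, such images miss arbitrarily small
   vectors w (a grid counting argument).  Switching the ramp on only where g loses
   its 2 eps margin extends g over the ball with values in Conf, and contracting
   the ball radially to the base point finishes the proof. *)

Set Implicit Arguments. Unset Strict Implicit. Unset Printing Implicit Defensive.
Import Order.TTheory GRing.Theory Num.Theory.
Local Open Scope classical_set_scope.
Local Open Scope ring_scope.

Lemma continuous_within_comp (T U W : topologicalType) (A : set T) (B : set U)
    (f : T -> U) (g : U -> W) :
  f @` A `<=` B -> {within A, continuous f} -> {within B, continuous g} ->
  {within A, continuous (g \o f)}.
Proof.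
move=> fAB /subspace_continuousP fc /subspace_continuousP gc.
apply/subspace_continuousP => x Ax.
have fAx : f @ within A (nbhs x) --> within B (nbhs (f x)).
  move=> P /(fc x Ax) BP.
  have {}BP : \forall y \near x, A y -> B (f y) -> P (f y) := BP.
  change (\forall y \near x, A y -> P (f y)).
  by apply: filterS BP => y + Ay => /(_ Ay); apply; apply: fAB; exists y.
exact: cvg_comp fAx (gc _ (fAB _ (imageP _ Ax))).
Qed.

Lemma closedX (T U : topologicalType) (A : set T) (B : set U) :
  closed A -> closed B -> closed (A `*` B).
Proof.
move=> cA cB; rewrite (_ : A `*` B = fst @^-1` A `&` snd @^-1` B) //.
have /continuous_closedP fst_closed : continuous (@fst T U) by move=> z; exact: cvg_fst.
have /continuous_closedP snd_closed : continuous (@snd T U) by move=> z; exact: cvg_snd.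
exact: closedI (fst_closed _ cA) (snd_closed _ cB).
Qed.

Lemma closed_segment (R : realType) (a b : R) : closed [set t : R | a <= t <= b].
Proof.
rewrite (_ : [set t | _] = [set t | a <= t] `&` [set t | t <= b]).
  by apply: closedI; [exact: closed_ge | exact: closed_le].
by apply/seteqP; split => t /=; [case/andP | case=> -> ->].
Qed.

Section Lipschitz.
Variables (R : realType) (V W : normedModType R).

Lemma lipschitzP (k : R) (f : V -> W) :
  k.-lipschitz f <-> forall x y, `|f x - f y| <= k * `|x - y|.
Proof. by split=> [fk x y|fk [x y] _]; [apply: (fk (x, y)) | exact: fk]. Qed.

Lemma lipschitz_dist_le (k : R) (f : V -> W) x y :
  k.-lipschitz f -> `|f x - f y| <= k * `|x - y|.
Proof. by move/lipschitzP; apply. Qed.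

Lemma lipschitz_continuous (k : R) (f : V -> W) : k.-lipschitz f -> continuous f.
Proof.
move=> /lipschitzP fk x; apply/cvgrPdist_lt => eps eps0.
have k1 : 0 < `|k| + 1 by rewrite ltr_wpDl.
apply: filterS (nbhsx_ballx x _ (divr_gt0 eps0 k1)) => y.
rewrite -ball_normE /= ltr_pdivlMr // => xy.
apply: le_lt_trans (fk x y) (le_lt_trans _ xy).
by rewrite mulrC ler_wpM2l // (le_trans (ler_norm k)) // lerDl.
Qed.

Lemma normr_segment_le1 (x y : V) (t : R) :
  `|x| <= 1 -> `|y| <= 1 -> 0 <= t <= 1 -> `|x + t *: (y - x)| <= 1.
Proof.
move=> x1 y1 /andP [t0 t1].
rewrite (_ : x + _ = (1 - t) *: x + t *: y); last first.
  by rewrite scalerBr scalerBl scale1r addrA addrAC.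
rewrite (le_trans (ler_normD _ _)) // !normrZ !ger0_norm ?subr_ge0 //.
by move: x1 y1; nra.
Qed.

End Lipschitz.

Section MatrixNorm.
Variable R : realType.

Lemma mx_norm_entry m n (x : 'M[R]_(m, n)) i j : `|x i j| <= `|x|.
Proof. by rewrite [leRHS]/Num.norm /= mx_normrE (bigD1 (i, j)) //= le_max lexx. Qed.

Lemma mx_norm_le m n (x : 'M[R]_(m, n)) c :
  0 <= c -> (forall i j, `|x i j| <= c) -> `|x| <= c.
Proof.
by move=> c0 xc; rewrite [leLHS]/Num.norm /= mx_normrE; apply: bigmax_le => // -[i j] _.
Qed.

Lemma mx_norm_row m n (x : 'M[R]_(m, n)) i : `|row i x| <= `|x|.
Proof. by apply: mx_norm_le => // a b; rewrite mxE mx_norm_entry. Qed.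

Lemma row_subB m n (x y : 'M[R]_(m, n)) i j :
  row i (x - y) - row j (x - y) = (row i x - row j x) - (row i y - row j y).
Proof. by rewrite !linearB /= addrACA. Qed.

Lemma row_dist_lipschitz m n (x y : 'M[R]_(m, n)) i j :
  `| `|row i x - row j x| - `|row i y - row j y| | <= 2 * `|x - y|.
Proof.
apply: le_trans (ler_dist_dist _ _) _; rewrite -row_subB.
by apply: le_trans (ler_normB _ _) _; rewrite mulr2n mulrDl mul1r lerD ?mx_norm_row.
Qed.

Lemma row_dist_near m n (x y : 'M[R]_(m, n)) i j delta :
  delta <= `|row i x - row j x| -> delta - 2 * `|x - y| <= `|row i y - row j y|.
Proof. by have := row_dist_lipschitz x y i j; rewrite ler_norml => /andP [_]; lra. Qed.

End MatrixNorm.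

Section Sphere.
Variables (R : realType) (k : nat).

Lemma sphere_norm_le1 (s : 'rV[R]_k.+1) : sphere R k s -> `|s| <= 1.
Proof.
move=> Ss; apply: mx_norm_le => // i l; rewrite (ord1 i).
have : s ord0 l ^+ 2 <= 1.
  rewrite -Ss (bigD1 l) //= lerDl; apply: sumr_ge0 => j _; exact: sqr_ge0.
by rewrite -real_normK ?num_real // expr_le1.
Qed.

Lemma sphere_pt_in : sphere R k (sphere_pt R k).
Proof.
rewrite /sphere /= (bigD1 ord0) //= big1 => [|i /negPf ni0].
  by rewrite mxE eqxx expr1n addr0.
by rewrite mxE ni0 expr0n.
Qed.

Lemma sphere_closed : closed (sphere R k).
Proof.
have sumsq_cont : continuous (fun s : 'rV[R]_k.+1 => \sum_(i < k.+1) s ord0 i ^+ 2 : R^o).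
  apply: continuous_big => [|i _ s]; first exact: add_continuous.
  by apply: continuousM; exact: coord_continuous.
have C1 : closed [set x : R | x = 1] by apply: closed_eq.
by move/continuous_closedP: sumsq_cont => /(_ _ C1).
Qed.

Lemma sphere_compact : compact (sphere R k).
Proof.
apply: bounded_closed_compact; last exact: sphere_closed.
rewrite /bounded_set /bounded_near; near=> M => s Ss /=.
apply: le_trans (sphere_norm_le1 Ss) _; near: M; exact: nbhs_pinfty_ge.
Unshelve. all: by end_near.
Qed.

End Sphere.

(** * Lipschitz approximation *)

Section UniformContinuity.
Variables (R : realType) (V W : normedModType R).

Lemma continuous_within_dist_lt (A : set V) (f : V -> W) x eps :
  {within A, continuous f} -> A x -> 0 < eps ->
  exists2 d, 0 < d & forall y, A y -> `|x - y| < d -> `|f x - f y| < eps.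
Proof.
move=> /subspace_continuousP /(_ x) fc Ax eps0.
have /cvgrPdist_lt /(_ eps eps0) /nbhs_ballP [d d0 fd] := fc Ax.
by exists d => // y Ay xy; apply: fd => //; rewrite -ball_normE.
Qed.

Lemma compact_unif_continuous (A : set V) (f : V -> W) eps :
  compact A -> {within A, continuous f} -> 0 < eps ->
  exists2 r, 0 < r & forall x y, A x -> A y -> `|x - y| < r -> `|f x - f y| < eps.
Proof.
move=> /compact_near_coveringP cA fc eps0.
have eps2 : 0 < eps / 2 by rewrite divr_gt0.
suff : \forall r \near (0 : R)^'+, A `<=` (fun x => A x -> forall y, A y ->
    `|x - y| < r -> `|f x - f y| < eps).
  move=> /(filterI (@nbhs_right_gt R 0)) /filter_ex [r [/= r0 fr]].
  by exists r => // x y Ax; exact: fr.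
apply: cA => x Ax; have [d d0 fd] := continuous_within_dist_lt fc Ax eps2.
have d2 : 0 < d / 2 by rewrite divr_gt0.
exists (ball x (d / 2), [set r | 0 < r < d / 2]).
  split; first exact: nbhsx_ballx.
  near=> r; apply/andP; split; near: r; [exact: nbhs_right_gt | exact: nbhs_right_lt].
move=> [x' r] [/= xx' /andP [r0 rd]] Ax' y Ay x'y.
rewrite -ball_normE /= in xx'.
have xy : `|x - y| < d.
  rewrite (le_lt_trans (ler_distD x' _ _)) // (splitr d) ltrD //.
  exact: lt_trans x'y rd.
rewrite (le_lt_trans (ler_distD (f x) _ _)) // (splitr eps) ltrD // ?fd //.
rewrite distrC fd // (lt_trans xx') // ltr_pdivrMr // ltr_pMr // ltr1n.
Unshelve. all: by end_near.
Qed.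

End UniformContinuity.

Section LipschitzEnvelope.
Variables (R : realType) (V : normedModType R) (A : set V) (F : V -> R) (L B : R).
Hypotheses (A0 : A !=set0) (L0 : 0 <= L) (FB : forall y, A y -> `|F y| <= B).

Definition lipschitz_envelope x := inf [set F y + L * `|x - y| | y in A].

Let envelope_set_lbound x : has_lbound [set F y + L * `|x - y| | y in A].
Proof.
exists (- B) => _ [y Ay <-]; have := FB Ay; rewrite ler_norml => /andP [FyB _].
by rewrite -[leLHS]addr0 lerD // mulr_ge0.
Qed.

Lemma envelope_le x y : A y -> lipschitz_envelope x <= F y + L * `|x - y|.
Proof. by move=> Ay; apply: (ge_inf (envelope_set_lbound x)); exists y. Qed.

Lemma envelope_ge x c :
  (forall y, A y -> c <= F y + L * `|x - y|) -> c <= lipschitz_envelope x.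
Proof.
move=> xc; apply: lb_le_inf => [|_ [y Ay <-]]; last exact: xc.
by case: A0 => y Ay; exists (F y + L * `|x - y|), y.
Qed.

Lemma envelope_lipschitz : L.-lipschitz lipschitz_envelope.
Proof.
suff env_le x x' : lipschitz_envelope x <= lipschitz_envelope x' + L * `|x - x'|.
  apply/lipschitzP => x x'; have := env_le x' x; rewrite distrC ler_norml.
  by move: (env_le x x') => *; apply/andP; split; lra.
rewrite -lerBlDr; apply: envelope_ge => y Ay.
rewrite lerBlDr (le_trans (envelope_le x Ay)) // -addrA lerD2l -mulrDr ler_wpM2l //.
by rewrite (le_trans (ler_distD x' x y)) // distrC addrC.
Qed.

Lemma envelope_approx r eta : 0 <= eta ->
  (forall s y, A s -> A y -> `|s - y| < r -> `|F s - F y| < eta) ->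
  2 * B <= L * r -> forall s, A s -> `|lipschitz_envelope s - F s| <= eta.
Proof.
move=> eta0 Fr Lr s As; have := envelope_le s As; rewrite subrr normr0 mulr0 addr0.
move=> env_up; suff : F s - eta <= lipschitz_envelope s.
  by rewrite ler_norml => ?; apply/andP; split; lra.
apply: envelope_ge => y Ay; have Lsy : 0 <= L * `|s - y| by rewrite mulr_ge0.
have [sy|sy] := ltP `|s - y| r.
  by move: (Fr s y As Ay sy); rewrite ltr_norml => /andP [? ?]; lra.
have := ler_wpM2l L0 sy; move: (FB As) (FB Ay); rewrite !ler_norml.
by move=> /andP [? ?] /andP [? ?] ?; lra.
Qed.

End LipschitzEnvelope.

Lemma lipschitz_approx (R : realType) (V : normedModType R) (m n : nat)
    (A : set V) (p : V) (f : V -> 'M[R]_(m, n)) eta :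
  compact A -> A p -> {within A, continuous f} -> 0 < eta ->
  exists g, exists L,
    [/\ 0 <= L, L.-lipschitz g, forall s, A s -> `|g s - f s| <= eta & g p = f p].
Proof.
move=> cA Ap fc eta0; have A0 : A !=set0 by exists p.
have nfc : {within A, continuous (Num.norm \o f)}.
  by apply: within_continuous_comp => // y _; exact: norm_continuous.
have [c /set_mem Ac fc_max] := compact_EVT_max A0 cA nfc.
have fB a b y : A y -> `|f y a b| <= `|f c|.
  by move=> Ay; apply: le_trans (mx_norm_entry _ a b) (fc_max y (mem_set Ay)).
have eta2 : 0 < eta / 2 by rewrite divr_gt0.
have [r r0 f_unif] := compact_unif_continuous cA fc eta2.
pose L := 2 * `|f c| / r.
have L0 : 0 <= L by rewrite divr_ge0 ?mulr_ge0 // ltW.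
have Lr : 2 * `|f c| <= L * r by rewrite divfK ?gt_eqF.
pose env a b := lipschitz_envelope A (fun y => f y a b) L.
have env_f a b s : A s -> `|env a b s - f s a b| <= eta / 2.
  apply: (envelope_approx A0 L0 (fB a b) (ltW eta2) _ Lr) => s' y As' Ay.
  move=> /(f_unif _ _ As' Ay); apply: le_lt_trans.
  by have := mx_norm_entry (f s' - f y) a b; rewrite !mxE.
pose g0 x := \matrix_(a, b) env a b x.
exists (fun x => g0 x - g0 p + f p), L; split => //; last by rewrite subrr add0r.
- apply/lipschitzP => x y; apply: mx_norm_le => [|a b]; first by rewrite mulr_ge0.
  rewrite !mxE (_ : _ - _ = env a b x - env a b y); last by ring.
  exact: lipschitz_dist_le (envelope_lipschitz A0 L0 (fB a b)).
- move=> s As; apply: mx_norm_le => [|a b]; first exact: ltW.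
  rewrite !mxE (_ : _ - _ = (env a b s - f s a b) - (env a b p - f p a b)); last by ring.
  by rewrite (le_trans (ler_normB _ _)) // (splitr eta) lerD ?env_f.
Qed.

(** * Avoiding Lipschitz images of a ball *)

Lemma natr_dist_lt1 (R : numDomainType) (a b : nat) : `|a%:R - b%:R : R| < 1 -> a = b.
Proof.
wlog ab : a b / (a <= b)%N => [hw|].
  by case: (leqP a b) => [/hw|/ltnW ba]; [apply | rewrite distrC => /(hw _ _ ba)].
rewrite distrC -natrB // ger0_norm // ltrn1 ltnS leqn0 subn_eq0 => ba.
by apply/eqP; rewrite eqn_leq ab ba.
Qed.

Lemma pigeonhole_far (R : realType) (V : normedModType R) (J Z : finType)
    (p : J -> V) (q : Z -> V) (sig : R) :
  (#|J| < #|Z|)%N -> (forall z z', `|q z - q z'| < sig -> z = z') ->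
  exists z, forall j, sig / 2 <= `|p j - q z|.
Proof.
move=> JZ q_sep; case: (boolP [exists z, [forall j, sig / 2 <= `|p j - q z|]]).
  by move=> /existsP [z /forallP]; exists z.
rewrite negb_exists => /forallP near_p.
have {}near_p z : exists j, `|p j - q z| < sig / 2.
  by move: (near_p z); rewrite negb_forall => /existsP [j]; rewrite -ltNge; exists j.
pose phi z := xchoose (near_p z).
have phi_inj : injective phi.
  move=> z z' phiz; apply: q_sep; rewrite (splitr sig).
  have := xchooseP (near_p z); have := xchooseP (near_p z').
  rewrite -/(phi z) -/(phi z') -phiz => pz' pz.
  by apply: le_lt_trans (ler_distD (p (phi z)) _ _) _; rewrite distrC ltrD.
by move: JZ; rewrite ltnNge (leq_card _ phi_inj).
Qed.

Section UnitCubeGrid.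
Variables (R : realType) (d M : nat).
Hypothesis M0 : (0 < M)%N.

Definition grid_node (u : {ffun 'I_d -> 'I_M.+1}) : 'rV[R]_d :=
  \row_l (-1 + 2 * (u l)%:R / M%:R).

Lemma grid_node_near x : `|x| <= 1 -> exists u, `|x - grid_node u| <= 2 / M%:R.
Proof.
have M0R : 0 < M%:R :> R by rewrite ltr0n.
move=> x1; pose t l := (x ord0 l + 1) * M%:R / 2.
have xl1 l : -1 <= x ord0 l <= 1 by rewrite -ler_norml (le_trans (mx_norm_entry _ _ _)).
have t0 l : 0 <= t l by rewrite /t divr_ge0 // mulr_ge0 //; case/andP: (xl1 l); lra.
have tM l : (Num.trunc (t l) < M.+1)%N.
  rewrite ltnS truncn_le_nat (@le_lt_trans _ _ M%:R) ?ltr_nat //.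
  by rewrite /t ler_pdivrMr // mulrC ler_pM2l //; case/andP: (xl1 l); lra.
exists [ffun l => Ordinal (tM l)]; apply: mx_norm_le => [|i l]; first by rewrite divr_ge0.
rewrite (ord1 i) !mxE ffunE /=.
have /andP [T1 T2] := truncn_itv (t0 l); rewrite -natr1 in T2.
set T := (Num.trunc (t l))%:R in T1 T2 *.
have -> : x ord0 l - (-1 + 2 * T / M%:R) = 2 * (t l - T) / M%:R.
  by rewrite /t; field; rewrite gt_eqF.
by rewrite ger0_norm ?divr_ge0 ?mulr_ge0 ?subr_ge0 // ler_pM2r ?invr_gt0 //; lra.
Qed.

End UnitCubeGrid.

Section LatticePoints.
Variables (R : realType) (n K : nat) (sig : R).
Hypothesis sig0 : 0 < sig.

Definition grid_point (z : {ffun 'I_n -> 'I_K}) : 'rV[R]_n := \row_l (sig * (z l)%:R).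

Lemma grid_point_sep z z' : `|grid_point z - grid_point z'| < sig -> z = z'.
Proof.
move=> zz'; apply/ffunP => l; apply/val_inj/(@natr_dist_lt1 R).
move: (le_lt_trans (mx_norm_entry _ ord0 l) zz'); rewrite !mxE -mulrBr normrM.
by rewrite gtr0_norm // -[ltRHS]mulr1 ltr_pM2l.
Qed.

Lemma grid_point_norm z : `|grid_point z| <= sig * K.-1%:R.
Proof.
have sig_ge0 := ltW sig0.
apply: mx_norm_le => [|i l]; first by rewrite mulr_ge0.
rewrite mxE ger0_norm ?mulr_ge0 // ler_pM2l // ler_nat.
by have := ltn_ord (z l); lia.
Qed.

End LatticePoints.

Lemma grid_count (r c d n : nat) : (d < n)%N ->
  (r * (c * (r * c.+1 ^ d).+1).+1 ^ d < (r * c.+1 ^ d).+1 ^ n)%N.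
Proof.
move=> dn; set K := (r * c.+1 ^ d).+1.
have pow_mono a b e : (a <= b)%N -> (a ^ e <= b ^ e)%N.
  by move=> ab; elim: e => // e IH; rewrite !expnS leq_mul.
have cK : ((c * K).+1 ^ d <= c.+1 ^ d * K ^ d)%N.
  by rewrite -expnMn pow_mono // mulSn addnC -addn1 leq_add2l.
apply: (@leq_ltn_trans (r * (c.+1 ^ d * K ^ d))); first by rewrite leq_mul2l cK orbT.
rewrite mulnA (@leq_trans (K ^ d.+1)) ?leq_pexp2l //.
by rewrite expnS ltn_pmul2r ?expn_gt0.
Qed.

Section Avoidance.
Variables (R : realType) (I : finType) (d n : nat) (h : I -> 'rV[R]_d -> 'rV[R]_n).
Variables (K rho : R).
Hypotheses (dn : (d < n)%N) (rho0 : 0 < rho) (K0 : 0 <= K).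
Hypothesis hK : forall a, K.-lipschitz (h a).

(* Each image of one of the |I| * (M + 1)^d nodes of the grid of mesh 2 / M on
   the unit cube comes within sig / 2 of at most one of the Kg^n lattice points of
   mesh sig, and every image point lies within K * 2 / M < sig / 2 of the image of
   a node.  The sizes are chosen so that nodes are fewer than lattice points. *)
Lemma lipschitz_images_avoid :
  exists w, `|w| < rho /\ forall a x, `|x| <= 1 -> h a x != w.
Proof.
pose c := (Num.trunc (4 * K / rho)).+1; pose Kg := (#|I| * c.+1 ^ d).+1.
pose M := (c * Kg)%N; pose sig := rho / Kg%:R.
have Kg0 : 0 < Kg%:R :> R by rewrite ltr0n.
have sig0 : 0 < sig by rewrite divr_gt0.
have cK : 4 * K < c%:R * rho.
  by have := truncnS_gt (4 * K / rho); rewrite ltr_pdivrMr.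
have mesh_small : K * (2 / M%:R) < sig / 2.
  have c0 : c%:R != 0 :> R by rewrite pnatr_eq0.
  rewrite (_ : K * _ = 4 * K / c%:R * (Kg%:R^-1 / 2)); last first.
    by rewrite /M natrM; field; rewrite c0 gt_eqF.
  rewrite (_ : sig / 2 = rho * (Kg%:R^-1 / 2)); last first.
    by rewrite /sig; field; rewrite gt_eqF.
  by rewrite ltr_pM2r ?divr_gt0 ?invr_gt0 // ltr_pdivrMr ?ltr0n //; lra.
have M0 : (0 < M)%N by rewrite muln_gt0.
have count : (#|{: I * {ffun 'I_d -> 'I_M.+1}}| < #|{ffun 'I_n -> 'I_Kg}|)%N.
  by rewrite card_prod !card_ffun !card_ord grid_count.
have [z z_far] := pigeonhole_far (fun au => h au.1 (grid_node R au.2))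
  count (grid_point_sep sig0).
exists (grid_point sig z); split.
  apply: le_lt_trans (grid_point_norm sig0 z) _.
  by rewrite /sig -mulrA gtr_pMr // ltr_pdivrMl // mulr1 ltr_nat.
move=> a x x1; apply/eqP => hx; have [u xu] := grid_node_near M0 x1.
have := z_far (a, u); rewrite /= -hx; apply/negP; rewrite -ltNge.
apply: le_lt_trans (lipschitz_dist_le _ _ (hK a)) (le_lt_trans _ mesh_small).
by rewrite ler_wpM2l // distrC.
Qed.

End Avoidance.

(** * Homotopies relative to a base point *)

Section RelativeHomotopy.
Variables (R : realType) (U T : topologicalType) (S : set U) (X : set T) (p : U).

Definition homotopic_rel (f g : U -> T) :=
  exists H : R * U -> T,
    [/\ {within unit_interval R `*` S, continuous H},
        H @` (unit_interval R `*` S) `<=` X,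
        (forall s, S s -> H (0, s) = f s),
        (forall s, S s -> H (1, s) = g s) &
        (forall t, unit_interval R t -> H (t, p) = f p)].

Definition homotopy_concat (H1 H2 : R * U -> T) (z : R * U) :=
  if z.1 <= 1 / 2 then H1 (2 * z.1, z.2) else H2 (2 * z.1 - 1, z.2).

Let map_fst_continuous (phi : R -> R) :
  continuous phi -> continuous (fun z : R * U => (phi z.1, z.2)).
Proof.
move=> phi_c [t s] W /= [[P Q]] [/= /phi_c Pt Qs] PQW.
by exists (phi @^-1` P, Q) => // -[t' s'] [/= ? ?]; apply: PQW.
Qed.

Lemma homotopy_concat_continuous H1 H2 : closed S ->
  {within unit_interval R `*` S, continuous H1} ->
  {within unit_interval R `*` S, continuous H2} ->
  (forall s, S s -> H1 (1, s) = H2 (0, s)) ->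
  {within unit_interval R `*` S, continuous (homotopy_concat H1 H2)}.
Proof.
move=> cS H1c H2c H12.
have dbl_c : continuous (fun t : R => 2 * t).
  by move=> t; apply: cvgM; [exact: cvg_cst | exact: cvg_id].
have dbl1_c : continuous (fun t : R => 2 * t - 1).
  by move=> t; apply: cvgB; [exact: dbl_c | exact: cvg_cst].
pose A := [set t : R | 0 <= t <= 1 / 2] `*` S.
pose B := [set t : R | 1 / 2 <= t <= 1] `*` S.
rewrite (_ : _ `*` _ = A `|` B); last first.
  apply/seteqP; split => -[t s] /=.
    move=> [/andP [t0 t1] Ss]; case: (lerP t (1 / 2)) => th; [left | right].
      by split => //=; apply/andP; split; lra.
    by split => //=; apply/andP; split; lra.
  by case=> -[/= /andP [t0 t1] Ss]; split => //; apply/andP; split; lra.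
apply: withinU_continuous; try by apply: closedX cS; exact: closed_segment.
- apply: (@subspace_eq_continuous _ _ _ (H1 \o (fun z => (2 * z.1, z.2)))).
    move=> [t s] /set_mem [/= /andP [_ th] _].
    by rewrite /from_subspace /homotopy_concat /= th.
  apply: continuous_within_comp H1c.
    by move=> _ [[t s] [/= /andP [t0 th] Ss] <-]; split => //=; apply/andP; split; lra.
  exact/continuous_subspaceT/(map_fst_continuous dbl_c).
- apply: (@subspace_eq_continuous _ _ _ (H2 \o (fun z => (2 * z.1 - 1, z.2)))).
    move=> [t s] /set_mem [/= /andP [th _] Ss].
    rewrite /from_subspace /homotopy_concat /=; case: ifPn => // th'.
    have -> : t = 1 / 2 by apply/eqP; rewrite eq_le th th'.
    by rewrite mulrC divfK ?pnatr_eq0 // subrr H12.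
  apply: continuous_within_comp H2c.
    by move=> _ [[t s] [/= /andP [th t1] Ss] <-]; split => //=; apply/andP; split; lra.
  exact/continuous_subspaceT/(map_fst_continuous dbl1_c).
Qed.

Lemma homotopic_rel_trans f g h : closed S -> S p ->
  homotopic_rel f g -> homotopic_rel g h -> homotopic_rel f h.
Proof.
move=> cS Sp [H1 [H1c H1X H10 H11 H1p]] [H2 [H2c H2X H20 H21 H2p]].
have I1 : unit_interval R 1 by rewrite /unit_interval /= lexx ler01.
have gpfp : g p = f p by rewrite -H11 // H1p.
exists (homotopy_concat H1 H2); split; rewrite /homotopy_concat /=.
- by apply: homotopy_concat_continuous => // s Ss; rewrite H11 ?H20.
- move=> _ [[t s] [/= /andP [t0 t1] Ss] <-] /=.
  case: ifPn => [th|]; last rewrite -ltNge => th.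
    by apply: H1X; exists (2 * t, s) => //; split => //=; apply/andP; split; lra.
  by apply: H2X; exists (2 * t - 1, s) => //; split => //=; apply/andP; split; lra.
- by move=> s Ss; rewrite ifT ?mulr0 ?H10 // divr_ge0.
- move=> s Ss; rewrite ifF; last by apply/negbTE; rewrite -ltNge; lra.
  by rewrite (_ : 2 * 1 - 1 = 1) ?H21 //; lra.
- move=> t /andP [t0 t1]; case: ifPn => [th|]; last rewrite -ltNge => th.
    by rewrite H1p //; apply/andP; split; lra.
  by rewrite H2p ?gpfp //; apply/andP; split; lra.
Qed.

End RelativeHomotopy.

Section StraightLineHomotopies.
Variables (R : realType) (V W : normedModType R) (S : set V) (X : set W) (p : V).

Lemma homotopic_rel_segment (f g : V -> W) :
  {within S, continuous f} -> {within S, continuous g} -> g p = f p ->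
  (forall s t, S s -> 0 <= t <= 1 -> X ((1 - t) *: f s + t *: g s)) ->
  homotopic_rel R S X p f g.
Proof.
move=> fc gc gpfp segX.
have snd_cont (h : V -> W) : {within S, continuous h} ->
    {within unit_interval R `*` S, continuous (h \o snd)}.
  move=> hc; apply: continuous_within_comp hc; first by move=> _ [[t s] [_ Ss] <-].
  by apply/continuous_subspaceT => z; exact: cvg_snd.
have fst_cont : {within unit_interval R `*` S, continuous (@fst R V)}.
  by apply/continuous_subspaceT => z; exact: cvg_fst.
exists ((fun z => (1 - z.1) *: f z.2) + (fun z => z.1 *: g z.2)); split.
- move=> z; apply: continuousD; apply: continuousZ.
  + by apply: continuousB; [exact: cvg_cst | exact: fst_cont].
  + exact: snd_cont fc z.
  + exact: fst_cont.
  + exact: snd_cont gc z.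
- by move=> _ [[t s] [/= It Ss] <-]; rewrite fctE; apply: segX.
- by move=> s Ss; rewrite fctE /= subr0 scale1r scale0r addr0.
- by move=> s Ss; rewrite fctE /= subrr scale0r scale1r add0r.
- by move=> t It; rewrite fctE /= gpfp -scalerDl subrK scale1r.
Qed.

Lemma homotopic_rel_contract (g G : V -> W) :
  continuous G -> {in S, G =1 g} -> S p ->
  (forall s t, S s -> 0 <= t <= 1 -> X (G (s + t *: (p - s)))) ->
  homotopic_rel R S X p g (fun=> g p).
Proof.
move=> Gc Gg Sp contrX; exists (fun z => G (z.2 + z.1 *: (p - z.2))); split.
- apply/continuous_subspaceT => z; apply: continuous_comp; last exact: Gc.
  apply: cvgD; first exact: cvg_snd.
  by apply: cvgZ; [exact: cvg_fst | apply: cvgB; [exact: cvg_cst | exact: cvg_snd]].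
- by move=> _ [[t s] [/= It Ss] <-]; apply: contrX.
- by move=> s Ss; rewrite /= scale0r addr0 Gg ?inE.
- by move=> s Ss; rewrite /= scale1r addrC subrK Gg ?inE.
- by move=> t It; rewrite /= subrr scaler0 addr0 Gg ?inE.
Qed.

End StraightLineHomotopies.

(** * Configuration spaces *)

Lemma dist_min_le (R : realDomainType) (a b c d D : R) :
  `|a - c| <= D -> `|b - d| <= D -> `|Order.min a b - Order.min c d| <= D.
Proof.
rewrite !ler_norml => /andP [? ?] /andP [? ?].
by case: (lerP a b) => ab; case: (lerP c d) => cd;
  rewrite ?(min_l ab) ?(min_r (ltW ab)) ?(min_l cd) ?(min_r (ltW cd));
  apply/andP; split; lra.
Qed.

Lemma norm_inv_natrB_le1 (R : realType) (i j : nat) : `|(i%:R - j%:R : R)^-1| <= 1.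
Proof.
have [->|ij] := eqVneq i j; first by rewrite subrr invr0 normr0.
have ij0 : (i%:R - j%:R : R) != 0 by rewrite subr_eq0 eqr_nat.
rewrite normrV ?unitfE // invf_le1 ?normr_gt0 // leNgt.
by apply/negP => /natr_dist_lt1 /eqP; rewrite (negPf ij).
Qed.

Section Ramp.
Variables (R : realType) (m N : nat).

Definition ramp (w : 'rV[R]_N) : 'M[R]_(m, N) :=
  \matrix_(i, l) ((i : nat)%:R * w ord0 l).

Lemma ramp_rowB w i j :
  row i (ramp w) - row j (ramp w) = ((i : nat)%:R - (j : nat)%:R) *: w.
Proof. by apply/rowP => l; rewrite !mxE (ord1 ord0) mulrBl. Qed.

Lemma ramp_norm w : `|ramp w| <= m%:R * `|w|.
Proof.
apply: mx_norm_le => [|i l]; first by rewrite mulr_ge0.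
rewrite mxE normrM normr_nat ler_pM ?ler_nat ?(ltnW (ltn_ord i)) //.
by rewrite (le_trans (mx_norm_entry _ _ _)) // (ord1 ord0).
Qed.

End Ramp.

Section ConfigurationSpace.
Variables (R : realType) (m N : nat) (e : rel 'I_m).
Implicit Types x y : 'M[R]_(m, N).

Definition edge_gap (c : R) x : R :=
  \big[Order.min/c]_(ij : 'I_m * 'I_m | e ij.1 ij.2) `|row ij.1 x - row ij.2 x|.

Lemma edge_gap_le c x i j : e i j -> edge_gap c x <= `|row i x - row j x|.
Proof.
by move=> eij; apply: (@bigmin_le_cond _ _ _ _ (i, j) (fun ij => e ij.1 ij.2)).
Qed.

Lemma edge_gap_le_id c x : edge_gap c x <= c.
Proof. exact: bigmin_le_id. Qed.

Lemma edge_gap_id c x :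
  (forall i j, e i j -> c <= `|row i x - row j x|) -> edge_gap c x = c.
Proof.
move=> xc; apply/eqP; rewrite eq_le edge_gap_le_id.
by apply: le_bigmin => // -[i j] /xc.
Qed.

Lemma edge_gap_gt0 c x : 0 < c -> Conf R N e x -> 0 < edge_gap c x.
Proof.
move=> c0 Cx; apply/bigmin_gtP; split => // -[i j] /= eij.
by rewrite normr_gt0 subr_eq0; apply/eqP/Cx.
Qed.

Lemma edge_gap_lipschitz c : 2.-lipschitz (edge_gap c).
Proof.
apply/lipschitzP => x y; rewrite /edge_gap; elim/big_ind2: _ => //.
- by rewrite subrr normr0 mulr_ge0.
- by move=> a b a' b'; apply: dist_min_le.
- by move=> ij _; apply: row_dist_lipschitz.
Qed.

Definition edge_cutoff (eps : R) x : R :=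
  Order.min 1 ((2 * eps - edge_gap (2 * eps) x) / eps).

Section EdgeCutoff.
Variable eps : R.
Hypothesis eps0 : 0 < eps.

Lemma edge_cutoff_ge0 x : 0 <= edge_cutoff eps x.
Proof.
rewrite le_min ler01 divr_ge0 ?(ltW eps0) // subr_ge0; exact: edge_gap_le_id.
Qed.

Lemma edge_cutoff_le1 x : edge_cutoff eps x <= 1.
Proof. by rewrite ge_min lexx. Qed.

Lemma edge_cutoff_sep x :
  (forall i j, e i j -> 2 * eps <= `|row i x - row j x|) -> edge_cutoff eps x = 0.
Proof. by move=> x_sep; rewrite /edge_cutoff edge_gap_id // subrr mul0r min_r. Qed.

Lemma edge_cutoff_lt1 x i j : edge_cutoff eps x < 1 -> e i j ->
  eps <= `|row i x - row j x|.
Proof.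
move=> cut_lt1 eij; apply: le_trans (edge_gap_le (2 * eps) x eij).
by move: cut_lt1; rewrite gt_min ltxx /= ltr_pdivrMr //; lra.
Qed.

Lemma edge_cutoff_lipschitz : (2 / eps).-lipschitz (edge_cutoff eps).
Proof.
apply/lipschitzP => x y; have c0 : 0 <= 2 / eps by rewrite divr_ge0 // ltW.
apply: dist_min_le; first by rewrite subrr normr0 mulr_ge0.
rewrite -mulrBl (_ : 2 * eps - _ - _ = edge_gap (2 * eps) y - edge_gap (2 * eps) x).
  rewrite normrM normfV (gtr0_norm eps0) mulrAC ler_pM2r ?invr_gt0 // distrC.
  exact: lipschitz_dist_le (edge_gap_lipschitz _).
by ring.
Qed.

End EdgeCutoff.

Lemma conf_near x y delta :
  (forall i j, e i j -> delta <= `|row i x - row j x|) -> `|x - y| < delta / 2 ->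
  Conf R N e y.
Proof.
move=> x_sep xy i j eij /eqP; rewrite -subr_eq0 => /eqP yij.
have := row_dist_near y (x_sep i j eij); rewrite yij normr0.
by rewrite ltr_pdivlMr in xy; lra.
Qed.

Lemma conf_segment x y delta t :
  (forall i j, e i j -> delta <= `|row i x - row j x|) -> `|x - y| < delta / 2 ->
  0 <= t <= 1 -> Conf R N e ((1 - t) *: x + t *: y).
Proof.
move=> x_sep xy /andP [t0 t1]; apply: conf_near x_sep _.
rewrite (_ : x - _ = t *: (x - y)); last first.
  by rewrite scalerBl scale1r scalerBr opprD opprB addrA [x + _]addrC subrK.
by rewrite normrZ ger0_norm // (le_lt_trans _ xy) // ler_piMl.
Qed.

Lemma conf_compact_margin (T : topologicalType) (A : set T) (f : T -> 'M[R]_(m, N)) :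
  compact A -> A !=set0 -> {within A, continuous f} -> f @` A `<=` Conf R N e ->
  exists2 delta, 0 < delta &
    forall s i j, A s -> e i j -> delta <= `|row i (f s) - row j (f s)|.
Proof.
move=> cA A0 fc fA.
have gap_cont : {within A, continuous (edge_gap 1 \o f)}.
  apply: within_continuous_comp => // y _.
  exact: lipschitz_continuous (edge_gap_lipschitz 1) y.
have [c /set_mem Ac gap_min] := compact_EVT_min A0 cA gap_cont.
exists (edge_gap 1 (f c)); first by apply: edge_gap_gt0 => //; apply: fA; exists c.
move=> s i j As eij; apply: le_trans (gap_min s (mem_set As)) _.
exact: edge_gap_le.
Qed.

Lemma conf_ramp w : irreflexive e -> w != 0 -> Conf R N e (ramp m w).
Proof.
move=> eirr w0 i j eij /eqP; rewrite -subr_eq0 ramp_rowB scaler_eq0 (negPf w0) orbF.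
by rewrite subr_eq0 eqr_nat => /eqP /val_inj ij; move: eij; rewrite ij eirr.
Qed.

Lemma conf_nonempty : irreflexive e -> (0 < N)%N -> Conf R N e !=set0.
Proof.
move=> eirr N0; exists (ramp m (const_mx 1)); apply: conf_ramp => //.
apply/eqP => /matrixP /(_ ord0 (Ordinal N0)); rewrite !mxE.
exact/eqP/oner_neq0.
Qed.

End ConfigurationSpace.

Section RampPerturbation.
Variables (R : realType) (m N d : nat) (e : rel 'I_m).
Variables (g : 'rV[R]_d -> 'M[R]_(m, N)) (L : R).
Hypotheses (eirr : irreflexive e) (dN : (d < N)%N) (L0 : 0 <= L).
Hypothesis gL : L.-lipschitz g.

Lemma exists_small_ramp r : 0 < r ->
  exists w, `|ramp m w| < r /\ forall x, `|x| <= 1 -> Conf R N e (g x + ramp m w).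
Proof.
move=> r0.
(* For i = j the coefficient is 0^-1 = 0, harmless since e is irreflexive. *)
pose h (ij : 'I_m * 'I_m) x :=
  ((ij.2 : nat)%:R - (ij.1 : nat)%:R)^-1 *: (row ij.1 (g x) - row ij.2 (g x)).
have hL ij : (2 * L).-lipschitz (h ij).
  apply/lipschitzP => x y; rewrite -scalerBr normrZ -row_subB.
  apply: le_trans (ler_pM _ _ (norm_inv_natrB_le1 _ _ _) (lexx _)) _ => //.
  rewrite mul1r -mulrA (le_trans (ler_normB _ _)) // mulr2n mulrDl mul1r.
  by rewrite lerD // (le_trans (mx_norm_row _ _)) // lipschitz_dist_le.
have m1 : 0 < m%:R + 1 :> R by rewrite ltr_wpDl.
have [w [wr w_avoid]] :=
  lipschitz_images_avoid dN (divr_gt0 r0 m1) (mulr_ge0 (ler0n _ 2) L0) hL.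
exists w; split.
  apply: le_lt_trans (ramp_norm _ _) _.
  rewrite ltr_pdivlMr // in wr; apply: le_lt_trans wr.
  by rewrite mulrC ler_wpM2l // lerDl.
move=> x x1 i j eij /eqP; rewrite -subr_eq0 !linearD /= addrACA ramp_rowB.
have ij : i != j by apply: contraTneq eij => ->; rewrite eirr.
rewrite addr_eq0 -scaleNr opprB => /eqP gw.
have := w_avoid (i, j) x x1; rewrite /h /= gw scalerA mulVf ?scale1r ?eqxx //.
by rewrite subr_eq0 eqr_nat eq_sym.
Qed.

Lemma conf_extension eps : 0 < eps ->
  exists G : 'rV[R]_d -> 'M[R]_(m, N),
    [/\ continuous G,
        forall x, (forall i j, e i j -> 2 * eps <= `|row i (g x) - row j (g x)|) ->
          G x = g x &
        forall x, `|x| <= 1 -> Conf R N e (G x)].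
Proof.
move=> eps0; have eps2 : 0 < eps / 2 by rewrite divr_gt0.
have [w [w_small w_conf]] := exists_small_ramp eps2.
pose cut x := edge_cutoff e eps (g x).
exists (g + (fun x => cut x *: ramp m w)); split.
- move=> x; apply: continuousD; first exact: lipschitz_continuous gL x.
  apply: continuousZr_tmp; apply: continuous_comp; first exact: lipschitz_continuous gL x.
  exact: lipschitz_continuous (edge_cutoff_lipschitz _ eps0) _.
- by move=> x gx_sep; rewrite fctE /cut edge_cutoff_sep // scale0r addr0.
- move=> x x1; rewrite fctE; have [cut_lt1|cut1] := ltP (cut x) 1; last first.
    rewrite (@le_anti _ _ (cut x) 1) ?edge_cutoff_le1 ?cut1 // scale1r.
    exact: w_conf.
  apply: (conf_near (fun i j => edge_cutoff_lt1 eps0 cut_lt1)).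
  rewrite opprD addNKr normrN normrZ ger0_norm ?edge_cutoff_ge0 //.
  by apply: le_lt_trans w_small; rewrite ler_piMl ?edge_cutoff_le1.
Qed.

End RampPerturbation.

Theorem corollary7p3 (R : realType) (m N : nat) (e : rel 'I_m) :
  simple_graph e -> graph_connected e -> (2 < N)%N ->
  n_connected R (N - 2) (Conf R N e).
Proof.
move=> [_ eirr] _ N2; split; first exact: conf_nonempty (ltnW (ltnW N2)).
move=> k kN _ _ f fc fS <-; have kN' : (k.+1 < N)%N by lia.
set S := sphere R k; set p := sphere_pt R k; have Sp : S p := sphere_pt_in R k.
change (homotopic_rel R S (Conf R N e) p f (fun=> f p)).
have [delta delta0 f_sep] :=
  conf_compact_margin (@sphere_compact R k) (ex_intro _ p Sp) fc fS.
pose eps := delta / 4; have eps0 : 0 < eps by rewrite divr_gt0.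
have [g [L [L0 gL g_f gp]]] := lipschitz_approx (@sphere_compact R k) Sp fc eps0.
have g_sep s i j : S s -> e i j -> 2 * eps <= `|row i (g s) - row j (g s)|.
  move=> Ss eij; apply: le_trans (row_dist_near (g s) (f_sep s i j Ss eij)).
  by move: (g_f s Ss); rewrite distrC /eps; lra.
have [G [Gc Gg G_conf]] := conf_extension eirr kN' L0 gL eps0.
apply: (@homotopic_rel_trans _ _ _ _ _ _ _ g _ (@sphere_closed R k) Sp).
  apply: homotopic_rel_segment => // [|s t Ss].
    exact/continuous_subspaceT/lipschitz_continuous/gL.
  apply: (conf_segment (fun i j => f_sep s i j Ss)).
  by rewrite distrC (le_lt_trans (g_f s Ss)) // /eps; lra.
rewrite -gp; apply: (homotopic_rel_contract Gc _ Sp) => [s /set_mem Ss|s t Ss t01].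
  by rewrite Gg // => i j; apply: g_sep.
by apply/G_conf/normr_segment_le1 => //; exact: sphere_norm_le1.
Qed.
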